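(* Let $k\ge 2$, let $\sim$ be an equivalence relation on $\{1,\dots,N\}^2$ satisfying condition (C2) with constant $B$, and assume $N\ge B$. Let $\pi$ be a partition of $\{1,\dots,k\}$ with $r$ blocks. Then $$\#\mathcal E^{(N)}_k(\pi)\le N^{r+1}\,B^{\,k-r-1}.$$
   Context: For $N\in\mathbb N$, let $\sim$ be an equivalence relation on $\{1,\dots,N\}^2$. Condition (C2): $\max_{p,q,r}\#\{s\in\{1,\dots,N\}:(p,q)\sim(r,s)\}\le B<\infty$, where $B$ does not depend on $N$. For a partition $\pi$ of $\{1,\dots,k\}$, let $\mathcal E^{(N)}_k(\pi)$ be the set of index sequences $i=(i_1,\dots,i_k)\in\{1,\dots,N\}^k$ such that, with $i_{k+1}:=i_1$, for all $l,m\in\{1,\dots,k\}$: $l$ and $m$ lie in the same block of $\pi$ if and only if $(i_l,i_{l+1})\sim(i_m,i_{m+1})$. (Every index sequence belongs to $\mathcal E^{(N)}_k(\pi)$ for exactly one partition $\pi$.) *)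

From HB Require Import structures.
From mathcomp Require Import all_boot all_order all_algebra.
Set Implicit Arguments. Unset Strict Implicit. Unset Printing Implicit Defensive.
Import Order.TTheory GRing.Theory Num.Theory.

(* Indices {1..N} are modelled by 'I_N (0-based); {1..k} by 'I_k.
   The successor l -> l+1 with i_{k+1} := i_1 is the cyclic successor ordS. *)

Definition is_equiv (N : nat) (eqv : rel ('I_N * 'I_N)) : Prop :=
  [/\ reflexive eqv, symmetric eqv & transitive eqv].

Definition cond_C2 (N : nat) (eqv : rel ('I_N * 'I_N)) (B : rat) : Prop :=
  forall p q r : 'I_N, (#|[set s : 'I_N | eqv (p, q) (r, s)]|%:R <= B)%R.

Definition cpair (k N : nat) (i : {ffun 'I_k -> 'I_N}) (l : 'I_k) : 'I_N * 'I_N :=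
  (i l, i (ordS l)).

Definition calE (k N : nat) (eqv : rel ('I_N * 'I_N)) (P : {set {set 'I_k}})
  : {set {ffun 'I_k -> 'I_N}} :=
  [set i : {ffun 'I_k -> 'I_N} | [forall l : 'I_k, forall m : 'I_k,
     [exists A in P, (l \in A) && (m \in A)] == eqv (cpair i l) (cpair i m)]].

From HB Require Import structures.
From mathcomp Require Import all_boot all_order all_algebra.
From mathcomp Require Import zify.
Import Order.TTheory GRing.Theory Num.Theory.

(* Reveal the index sequence one entry at a time.  The first entry is free
   (N choices).  Entry j > 0 closes the pair (i_{j-1}, i_j); if some earlier
   pair lies in the same block of pi, the two pairs are equivalent, and as the
   earlier pair and i_{j-1} are already known, (C2) leaves at most B values for
   i_j.  Otherwise there are N values, but this happens at most once per block.
   So #E <= N^(1+f) B^(k-1-f) with f <= r, and B <= N turns this into the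
   claimed bound. *)

Local Open Scope ring_scope.

Lemma card_le_mul_card_imset (R : numDomainType) (T U : finType) (X : {set T})
    (g : T -> U) (c : R) :
  (forall y, #|[set x in X | g x == y]|%:R <= c) -> #|X|%:R <= c * #|g @: X|%:R.
Proof.
move=> fiber_le.
rewrite -sum1_card (partition_big g (mem (g @: X))) /=; last first.
  by move=> x xX; apply: imset_f.
have card_fiber y : (\sum_(x in X | g x == y) 1)%N = #|[set x in X | g x == y]|.
  by rewrite -sum1_card; apply: eq_bigl => x; rewrite inE.
under eq_bigr do rewrite card_fiber.
rewrite natr_sum (le_trans (ler_sum _ (fun y _ => fiber_le y))) //.
by rewrite sumr_const mulr_natr.
Qed.

Section SequentialChoice.
Variables (R : numDomainType) (T : finType) (k : nat).

Definition prefix (j : nat) (f : {ffun 'I_k -> option T}) : {ffun 'I_k -> option T} :=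
  [ffun x : 'I_k => if (x < j)%N then f x else None].

Definition some_ffun (i : {ffun 'I_k -> T}) : {ffun 'I_k -> option T} :=
  [ffun x : 'I_k => Some (i x)].

Lemma prefix_prefix j n f : (j <= n)%N -> prefix j (prefix n f) = prefix j f.
Proof.
move=> le_jn; apply/ffunP => x; rewrite !ffunE.
by case: ifP => // lt_xj; rewrite (leq_trans lt_xj le_jn).
Qed.

Lemma eq_prefix_some_ffun j i1 i2 :
  prefix j (some_ffun i1) = prefix j (some_ffun i2) -> forall x : 'I_k, (x < j)%N -> i1 x = i2 x.
Proof. by move=> /ffunP eq12 x lt_xj; move: (eq12 x); rewrite !ffunE lt_xj => -[]. Qed.

Lemma prefixS_eq (j : 'I_k) f1 f2 :
  prefix j f1 = prefix j f2 -> f1 j = f2 j -> prefix j.+1 f1 = prefix j.+1 f2.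
Proof.
move=> /ffunP eq_below eq_at; apply/ffunP => x; rewrite !ffunE ltnS leq_eqVlt.
case: eqP => [/val_inj -> //|_ /=]; case: ifP => // lt_xj.
by move: (eq_below x); rewrite !ffunE lt_xj.
Qed.

Variables (E : {set {ffun 'I_k -> T}}) (c : 'I_k -> R).
Hypothesis c_ge0 : forall j, 0 <= c j.
Hypothesis few_choices : forall (j : 'I_k) i0, i0 \in E ->
  exists2 S : {set T}, #|S|%:R <= c j &
    forall i, i \in E -> (forall x : 'I_k, (x < j)%N -> i x = i0 x) -> i j \in S.

Let prefixes j := [set prefix j (some_ffun i) | i in E].

Lemma card_prefixesS (j : 'I_k) : #|prefixes j.+1|%:R <= c j * #|prefixes j|%:R.
Proof.
have -> : prefixes j = prefix j @: prefixes j.+1.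
  by rewrite -imset_comp; apply: eq_imset => i /=; rewrite prefix_prefix.
apply: card_le_mul_card_imset => y; set F := [set f in _ | _].
have [->|[f0 f0F]] := set_0Vmem F; first by rewrite cards0.
move: f0F; rewrite inE => /andP[/imsetP[i0 i0E ->] /eqP y_def].
have [S card_S inS] := few_choices j i0 i0E.
apply: le_trans card_S; rewrite ler_nat -(card_imset S (@Some_inj _)).
rewrite -(card_in_imset (f := fun f : {ffun 'I_k -> option T} => f j)); last first.
  move=> f1 f2; rewrite !inE => /andP[/imsetP[i1 _ ->] /eqP y1] /andP[/imsetP[i2 _ ->] /eqP y2].
  rewrite !ffunE ltnSn => -[eq_at]; apply: prefixS_eq; last by rewrite !ffunE eq_at.
  by move: y1 y2; rewrite !prefix_prefix // => -> ->.
apply: subset_leq_card; apply/subsetP => _ /imsetP[f /[!inE] /andP[/imsetP[i iE ->] /eqP yi] ->].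
rewrite !ffunE ltnSn; apply: imset_f; apply: inS => //; apply: (@eq_prefix_some_ffun j).
by move: yi y_def; rewrite !prefix_prefix // => -> ->.
Qed.

Lemma card_prefixes_le j : (j <= k)%N ->
  #|prefixes j|%:R <= \prod_(x : 'I_k | (x < j)%N) c x.
Proof.
elim: j => [_|j IHj lt_jk].
  rewrite big_pred0 // lern1; apply/card_le1_eqP => _ _ /imsetP[i1 _ ->] /imsetP[i2 _ ->].
  by apply/ffunP => x; rewrite !ffunE.
pose jo := Ordinal lt_jk.
rewrite (bigD1 jo) //= (eq_bigl (fun x : 'I_k => (x < j)%N)); last first.
  by move=> x; rewrite ltnS andbC -val_eqE -ltn_neqAle.
apply: le_trans (card_prefixesS jo) _.
by rewrite ler_wpM2l // IHj // ltnW.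
Qed.

Lemma card_le_prod_choices : #|E|%:R <= \prod_j c j.
Proof.
have := @card_prefixes_le k (leqnn k); rewrite (eq_bigl _ _ (@ltn_ord k)) card_in_imset //.
move=> i1 i2 _ _ /eq_prefix_some_ffun eq12; apply/ffunP => x; exact: eq12.
Qed.

End SequentialChoice.

Lemma ler_trade_powers (R : numFieldType) (x y : R) (a m n : nat) :
  0 < x -> x <= y -> (m <= n)%N ->
  y ^+ m * x ^+ a <= y ^+ n * x ^ (a%:Z + m%:Z - n%:Z).
Proof.
move=> x_gt0 le_xy /subnKC def_n; rewrite -{}def_n; set d := (n - m)%N.
have -> : a%:Z + m%:Z - (m + d)%N%:Z = a%:Z - d%:Z by lia.
rewrite expfzDr ?gt_eqF // -exprnP -exprnN exprD.
have -> : y ^+ m * y ^+ d * (x ^+ a * x ^- d) = y ^+ m * x ^+ a * (y ^+ d / x ^+ d).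
  by rewrite mulrACA mulrA.
have y_gt0 : 0 < y := lt_le_trans x_gt0 le_xy.
apply: ler_peMr; first by rewrite mulr_ge0 ?exprn_ge0 ?ltW.
by rewrite ler_pdivlMr ?exprn_gt0 // mul1r lerXn2r // ?nnegrE ltW.
Qed.

Lemma val_ordS n (l : 'I_n) : (l.+1 < n)%N -> val (ordS l) = l.+1.
Proof. by move=> lt_ln; rewrite /= modn_small. Qed.

Lemma val_ord_pred n (j : 'I_n) : (0 < j)%N -> val (ord_pred j) = j.-1.
Proof.
move=> j_gt0; rewrite /= -subn1 -addnBAC // modnDr modn_small subn1 //.
exact: leq_ltn_trans (leq_pred j) (ltn_ord j).
Qed.

Section PairCounting.
Context {k N : nat} {eqv : rel ('I_N * 'I_N)} {B : rat} (P : {set {set 'I_k}}).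

Definition same_block (l m : 'I_k) := [exists A in P, (l \in A) && (m \in A)].

Lemma calE_same_block i l m :
  i \in calE eqv P -> same_block l m = eqv (cpair i l) (cpair i m).
Proof. by rewrite inE => /forallP/(_ l)/forallP/(_ m)/eqP. Qed.

(* Position [j] closes the pair [ord_pred j]; [old_block j] says that an
   earlier pair lies in the same block.  For [j = 0] the condition [m.+1 < j]
   fails, so [i 0] always counts as a free choice. *)
Definition old_block (j : 'I_k) :=
  [exists m : 'I_k, (m.+1 < j)%N && same_block m (ord_pred j)].

Definition choices (j : 'I_k) : rat := if old_block j then B else N%:R.

Lemma card_calE_le_prod_choices :
  cond_C2 eqv B -> 0 <= B -> #|calE eqv P|%:R <= \prod_j choices j.
Proof.
move=> C2 B_ge0; apply: card_le_prod_choices => [j|j i0 _].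
  by rewrite /choices; case: ifP.
rewrite /choices; case: ifPn => [/existsP[m /andP[lt_mj blk]]|_]; last first.
  by exists setT => [|i _ _]; rewrite ?inE // cardsT card_ord.
set p := ord_pred j.
exists [set s | eqv (cpair i0 m) (i0 p, s)]; first exact: C2.
move=> i iE agree; rewrite inE.
have j_gt0 : (0 < j)%N by apply: leq_ltn_trans lt_mj.
have lt_pj : (p < j)%N by rewrite val_ord_pred // ltn_predL.
have lt_Smj : (ordS m < j)%N by rewrite val_ordS // (ltn_trans lt_mj).
have := calE_same_block i m p iE; rewrite blk /cpair ord_predK => /esym.
have [-> -> ->] : [/\ i m = i0 m, i (ordS m) = i0 (ordS m) & i p = i0 p].
  by split; apply: agree; rewrite // ltnW.
by [].
Qed.

Lemma prod_choices :
  \prod_j choices j =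
    B ^+ #|[set j | old_block j]| * N%:R ^+ #|~: [set j | old_block j]|.
Proof.
rewrite (bigID old_block) /= -!prodr_const.
congr (_ * _); apply: eq_big => [j|j]; rewrite ?inE // /choices.
- by move=> ->.
- by move=> /negbTE ->.
Qed.

Lemma card_new_blocks :
  partition P [set: 'I_k] -> (#|~: [set j | old_block j]| <= #|P|.+1)%N.
Proof.
case/and3P => /eqP cover_P _ _; set F := ~: _.
have in_cover l : l \in cover P by rewrite cover_P inE.
have sub_F : F \subset [set j : 'I_k | val j == 0%N] :|: [set j in F | 0 < j]%N.
  by apply/subsetP => j; rewrite !inE => ->; rewrite lt0n orbN.
apply: leq_trans (subset_leq_card sub_F) _; apply: leq_trans (leq_card_setU _ _) _.
rewrite -[#|P|.+1]add1n leq_add //.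
  by apply/card_le1_eqP => j1 j2; rewrite !inE => /eqP j1_0 /eqP j2_0; apply: val_inj; rewrite j1_0.
have old_later (j1 j2 : 'I_k) : (0 < j1 < j2)%N ->
    pblock P (ord_pred j1) = pblock P (ord_pred j2) -> old_block j2.
  move=> /andP[j1_gt0 lt12] eq_blk; apply/existsP; exists (ord_pred j1).
  rewrite val_ord_pred // prednK // lt12; apply/existsP; exists (pblock P (ord_pred j1)).
  by rewrite pblock_mem // mem_pblock in_cover eq_blk mem_pblock in_cover.
rewrite -(card_in_imset (f := fun j => pblock P (ord_pred j))); last first.
  move=> j1 j2; rewrite !inE => /andP[new1 j1_gt0] /andP[new2 j2_gt0] eq_blk.
  case: (ltngtP j1 j2) => [lt12|lt21|/val_inj //].
  - by rewrite (old_later j1 j2) ?j1_gt0 in new2.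
  - by rewrite (old_later j2 j1) ?j2_gt0 in new1.
apply: subset_leq_card; apply/subsetP => _ /imsetP[j _ ->]; exact: pblock_mem.
Qed.

End PairCounting.

Lemma cond_C2_ge1 {N} {eqv : rel ('I_N * 'I_N)} {B : rat} :
  (0 < N)%N -> reflexive eqv -> cond_C2 eqv B -> 1 <= B.
Proof.
move=> N_gt0 refl_eqv C2; pose x : 'I_N := Ordinal N_gt0.
apply: le_trans (C2 x x x); rewrite ler1n card_gt0; apply/set0Pn; exists x.
by rewrite inE refl_eqv.
Qed.

Theorem mainTheorem4 (k N : nat) (eqv : rel ('I_N * 'I_N)) (B : rat)
  (P : {set {set 'I_k}}) :
  (2 <= k)%N ->
  is_equiv eqv ->
  cond_C2 eqv B ->
  (B <= N%:R)%R ->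
  partition P [set: 'I_k] ->
  (#|calE eqv P|%:R <=
     N%:R ^+ (#|P|.+1) * B ^ (k%:Z - #|P|%:Z - 1) :> rat)%R.
Proof.
move=> k_ge2 [refl_eqv _ _] C2 le_BN partP.
have [N0|N_gt0] := posnP N.
  have -> : #|calE eqv P| = 0%N.
    apply/eqP; rewrite -leqn0; apply: leq_trans (max_card _) _.
    by rewrite card_ffun !card_ord N0 (exp0n (ltnW k_ge2)).
  by rewrite N0 expr0n mul0r.
have B_ge1 := cond_C2_ge1 N_gt0 refl_eqv C2.
have B_gt0 : 0 < B := lt_le_trans ltr01 B_ge1.
apply: le_trans (card_calE_le_prod_choices P C2 (ltW B_gt0)) _.
rewrite prod_choices mulrC.
have card_old := cardsC [set j | old_block P j]; rewrite card_ord in card_old.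
have -> : k%:Z - #|P|%:Z - 1 =
    #|[set j | old_block P j]|%:Z + #|~: [set j | old_block P j]|%:Z - #|P|.+1%:Z.
  by lia.
exact: ler_trade_powers B_gt0 le_BN (card_new_blocks P partP).
Qed.
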